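(* In the 2-sided error regime, there exists an algorithm that, given a moldgraph with $m$ edges, finds a realized spanning tree with high probability using $O(m\log m)$ queries. Moreover, no algorithm can do better than $\Omega(m\log m)$ queries.
   Context: Problem (graph connectivity with noisy queries): a graph $G=(V,E)$, the moldgraph, with $n$ vertices and $m$ edges is given. An adversary selects an arbitrary connected spanning subgraph $G'$ of $G$ to be realized; its edges are called realized. The algorithm does not observe $G'$, but may query an oracle on any edge $e\in E$ (``Is $e$ realized?''), receiving ``Yes'' or ``No''; each query costs $1$, and answers to distinct queries (including repeated queries of the same edge) are independent random. The goal is to output a spanning tree of $G$ all of whose edges are realized, using as few queries as possible. In the 2-sided error regime, each answer is wrong (``No'' for a realized edge, ``Yes'' for a non-realized edge) with a constant probability $p<1/2$. ``With high probability'' means with probability tending to $1$ as $m\to\infty$. The lower bound is a worst-case statement over moldgraphs and realized subgraphs, for algorithms succeeding with constant failure probability. *)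

From mathcomp Require Import all_boot.
From Stdlib Require Import Reals.
Set Implicit Arguments. Unset Strict Implicit. Unset Printing Implicit Defensive.

Definition simple_graph (n m : nat) (ends : 'I_m -> 'I_n * 'I_n) : Prop :=
  (forall e, (ends e).1 <> (ends e).2) /\
  (forall e1 e2, ends e1 = ends e2 \/ ends e1 = ((ends e2).2, (ends e2).1) ->
                 e1 = e2).

Definition adj (n m : nat) (ends : 'I_m -> 'I_n * 'I_n) (S : {set 'I_m})
  : rel 'I_n :=
  fun u v => [exists e in S, (ends e == (u, v)) || (ends e == (v, u))].

Definition spanning_connected (n m : nat) (ends : 'I_m -> 'I_n * 'I_n)
  (S : {set 'I_m}) : bool :=
  [forall u : 'I_n, forall v : 'I_n, connect (adj ends S) u v].

(* (V, S) has no cycle: no edge of S lies on a cycle of S, i.e. removing any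
   edge of S disconnects its endpoints in S. *)
Definition acyclic (n m : nat) (ends : 'I_m -> 'I_n * 'I_n)
  (S : {set 'I_m}) : bool :=
  [forall e in S, ~~ connect (adj ends (S :\ e)) (ends e).1 (ends e).2].

Definition spanning_tree (n m : nat) (ends : 'I_m -> 'I_n * 'I_n)
  (T : {set 'I_m}) : bool :=
  spanning_connected ends T && acyclic ends T.

(* Randomized adaptive query algorithms for a moldgraph with m edges, as
   finite decision trees:
   - Output T : stop and output the edge set T;
   - Query e k : query the oracle on edge e, continue with k answer
     (answer true = "Yes");
   - Coin q k : internal random coin, true with probability q (clamped to
     [0,1]), continue with k outcome. *)
Inductive alg (m : nat) : Type :=
| Output of {set 'I_m}
| Query of 'I_m & (bool -> alg m)
| Coin of R & (bool -> alg m).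

Definition clamp01 (q : R) : R := Rmax 0 (Rmin 1 q).

Fixpoint queries (m : nat) (A : alg m) : nat :=
  match A with
  | Output _ => 0
  | Query _ k => (maxn (queries (k true)) (queries (k false))).+1
  | Coin _ k => maxn (queries (k true)) (queries (k false))
  end.

(* Probability that algorithm A outputs a spanning tree of the moldgraph all
   of whose edges are realized, when the realized edge set is Real and each
   oracle answer is independently wrong with probability p (2-sided error). *)
Fixpoint success (p : R) (n m : nat) (ends : 'I_m -> 'I_n * 'I_n)
  (Real : {set 'I_m}) (A : alg m) : R :=
  match A with
  | Output T =>
      if spanning_tree ends T && (T \subset Real)
      then 1%R else 0%R
  | Query e k =>
      ((1 - p) * success p ends Real (k (e \in Real))
       + p * success p ends Real (k (~~ (e \in Real))))%R
  | Coin q k =>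
      (clamp01 q * success p ends Real (k true)
       + (1 - clamp01 q) * success p ends Real (k false))%R
  end.

From mathcomp Require Import all_boot.
From Stdlib Require Import Reals Lra Lia Classical.
From mathcomp Require Import zify Rstruct.
Set Implicit Arguments. Unset Strict Implicit. Unset Printing Implicit Defensive.

(* Upper bound: query every edge [2 L (log2 m + 1)] times and accept it on a
   majority of Yes answers.  With [z = sqrt (p / (1 - p))], the quantity
   [z ^ (#correct - #wrong answers)] is multiplied in expectation by
   [(1 - p) z + p / z = 2 sqrt (p (1 - p)) < 1] per answer, so each vote errs
   with probability at most [1 / (m + 1) ^ 2]; with high probability the
   accepted edges are exactly the realized ones, and a minimum connected subset
   of them is a realized spanning tree.

   Lower bound: hang [N ~ m / 3] triangles on a common hub, in each of which
   exactly one of the two edges at the outer vertex is realized, according to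
   a hidden bit; any realized spanning tree reveals all [N] bits.  Weight each
   bit vector by the likelihood of the answers seen so far.  A product
   potential, one factor per triangle, dominates these likelihoods, starts at
   [(2 / lam ^ K) ^ N] and grows at most by the factor [lam = 1 + eps] per
   query, where [eps ~ rho ^ K], [rho = p / (1 - p)] and [K ~ log m].  Hence the
   average success probability over the [2 ^ N] bit vectors is at most
   [lam ^ B / lam ^ (N K)], which is below 1/2 unless the number of queries
   [B] is at least [N K / 2], i.e. of order [m log m]. *)

Lemma clamp01_bounds q : (0 <= clamp01 q <= 1)%R.
Proof.
rewrite /clamp01; split; first exact: Rmax_l.
by apply: Rmax_lub; [lra | exact: Rmin_l].
Qed.

Lemma convex_comb_bounds c d a b : (0 <= c)%R -> (0 <= d)%R -> (c + d = 1)%R ->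
  (0 <= a <= 1)%R -> (0 <= b <= 1)%R -> (0 <= c * a + d * b <= 1)%R.
Proof. by move=> *; split; nra. Qed.

Lemma success_bounds p n m (ends : 'I_m -> 'I_n * 'I_n) Real (A : alg m) :
  (0 <= p <= 1)%R -> (0 <= success p ends Real A <= 1)%R.
Proof.
move=> hp; elim: A => [T|e k IH|q k IH] /=.
- by case: ifP => _; lra.
- by apply: convex_comb_bounds => //; lra.
- have := clamp01_bounds q.
  by move=> hq; apply: convex_comb_bounds => //; lra.
Qed.

Section SpanningSubtree.
Variables (n m : nat) (ends : 'I_m -> 'I_n * 'I_n).

Lemma adj_sym S : symmetric (adj ends S).
Proof. by move=> u v; apply/existsP/existsP => -[e He]; exists e; rewrite orbC. Qed.

Lemma connect_adj_sym S : connect_sym (adj ends S).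
Proof. exact/sym_connect_sym/adj_sym. Qed.

Lemma connect_setD1 (T : {set 'I_m}) e :
  e \in T -> connect (adj ends (T :\ e)) (ends e).1 (ends e).2 ->
  subrel (connect (adj ends T)) (connect (adj ends (T :\ e))).
Proof.
move=> eT Hc; apply: connect_sub => x y /existsP [e' /andP [e'T He']].
case: (eqVneq e' e) He' => [-> | ne] He'.
- by case/orP: He' => /eqP He; rewrite He /= in Hc; rewrite // connect_adj_sym.
- by apply: connect1; apply/existsP; exists e'; rewrite He' !inE ne e'T.
Qed.

Definition spanning_subtree (S : {set 'I_m}) : {set 'I_m} :=
  [arg min_(T < S | (T \subset S) && spanning_connected ends T) #|T|].

(* a connected spanning subgraph of minimum size has no cycle, since any edge
   on a cycle could be removed *)
Lemma spanning_subtreeP S : spanning_connected ends S ->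
  spanning_tree ends (spanning_subtree S) && (spanning_subtree S \subset S).
Proof.
move=> HS; rewrite /spanning_subtree.
case: arg_minnP; first by rewrite subxx HS.
move=> T /andP [TS Tc] Tmin; rewrite /spanning_tree Tc TS andbT.
apply/forallP => e; apply/implyP => eT; apply/negP => Hc.
have Tc' : spanning_connected ends (T :\ e).
  apply/forallP => u; apply/forallP => v; apply: connect_setD1 => //.
  by move/forallP: Tc => /(_ u) /forallP.
have := Tmin (T :\ e); rewrite Tc' andbT (subset_trans (subsetDl T _) TS).
by rewrite (cardsD1 e T) eT add1n ltnn => /(_ isT).
Qed.

End SpanningSubtree.

(** * Majority voting *)

Lemma pow_le1 (z : R) d : (0 <= z <= 1)%R -> (0 <= z ^ d <= 1)%R.
Proof.
move=> hz; split; first by apply: pow_le; lra.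
by rewrite -(pow1 d); apply: pow_incr; lra.
Qed.

Lemma pow_ratio_ge1 (z : R) a b : (0 < z <= 1)%R -> (a <= b)%N -> (1 <= z ^ a / z ^ b)%R.
Proof.
move=> hz /subnKC <-; rewrite pow_add.
have ha : (0 < z ^ a)%R by apply: pow_lt; lra.
have hd : (0 < z ^ (b - a))%R by apply: pow_lt; lra.
have [_ hd1] := pow_le1 (b - a) (ltac:(lra) : (0 <= z <= 1)%R).
have -> : (z ^ a / (z ^ a * z ^ (b - a)) = / z ^ (b - a))%R by field; lra.
by rewrite -Rinv_1; apply: Rinv_le_contravar.
Qed.

Lemma one_sub_mul_le a s x : (0 <= s <= 1)%R -> (0 <= x)%R ->
  (1 <= a \/ 0 <= a /\ s <= x)%R -> ((1 - a) * s <= x)%R.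
Proof. by move=> hs hx [ha | [ha hsx]]; nra. Qed.

Lemma one_sub_pow_ge (X : R) k : (0 <= X <= 1)%R -> (1 - INR k * X <= (1 - X) ^ k)%R.
Proof.
move=> hX; elim: k => [|k IH]; first by rewrite /=; lra.
rewrite S_INR -tech_pow_Rmult; have := pos_INR k; nra.
Qed.

Definition mgf (p z : R) : R := ((1 - p) * z + p / z)%R.

Section MajorityVote.
Variables (p : R) (n m : nat) (ends : 'I_m -> 'I_n * 'I_n).
Hypothesis hp : (0 <= p <= 1)%R.

(* [y] and [w] count the Yes and No answers seen so far; ties count as No. *)
Fixpoint vote (e : 'I_m) (j y w : nat) (cont : bool -> alg m) : alg m :=
  if j is j'.+1 then
    Query e (fun a => if a then vote e j' y.+1 w cont else vote e j' y w.+1 cont)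
  else cont (w < y)%N.

Lemma vote_queries e j y w cont Q :
  (forall b, queries (cont b) <= Q)%N -> (queries (vote e j y w cont) <= j + Q)%N.
Proof.
move=> hQ; elim: j y w => [|j IH] y w /=; first exact: hQ.
by rewrite ltnS geq_max !IH.
Qed.

Variables (z : R) (Real : {set 'I_m}).
Hypothesis hz : (0 < z <= 1)%R.

(* Chernoff bound: z ^ (#correct - #wrong answers) is a supermartingale up to
   the factor [mgf p z] per query. *)
Lemma vote_success e cont j y w : let b := e \in Real in
  ((1 - mgf p z ^ j * z ^ (if b then y else w) / z ^ (if b then w else y))
     * success p ends Real (cont b)
   <= success p ends Real (vote e j y w cont))%R.
Proof.
move=> b; have : b = (e \in Real) by []; clearbody b => Hb.
have Sb := success_bounds ends Real (cont b) hp.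
have hpow d : (0 < z ^ d)%R by apply: pow_lt; lra.
elim: j y w => [|j IH] y w /=.
- rewrite Rmult_1_l; apply: one_sub_mul_le => //.
    by have [] := success_bounds ends Real (cont (w < y)%N) hp.
  have hr a c : (0 <= z ^ a / z ^ c)%R by apply: Rle_mult_inv_pos; [apply: Rlt_le |].
  case: b {Hb} Sb; case: ltnP => hyw Sb.
  + by right; split; [apply: hr | apply: Rle_refl].
  + by left; apply: pow_ratio_ge1.
  + by left; apply: pow_ratio_ge1 => //; apply: ltnW.
  + by right; split; [apply: hr | apply: Rle_refl].
- have IH1 := IH y.+1 w; have IH2 := IH y w.+1.
  have Sb0 : (0 <= success p ends Real (cont b))%R by lra.
  have h1p : (0 <= 1 - p)%R by lra.
  have h0p : (0 <= p)%R by lra.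
  rewrite -Hb; case: b {Hb IH} Sb Sb0 IH1 IH2 => /= Sb Sb0 IH1 IH2.
  + apply: (Rle_trans _ _ _ _ (Rplus_le_compat _ _ _ _
      (Rmult_le_compat_l _ _ _ h1p IH1) (Rmult_le_compat_l _ _ _ h0p IH2))).
    by right; rewrite /mgf; field; have := hpow w; lra.
  + apply: (Rle_trans _ _ _ _ (Rplus_le_compat _ _ _ _
      (Rmult_le_compat_l _ _ _ h1p IH2) (Rmult_le_compat_l _ _ _ h0p IH1))).
    by right; rewrite /mgf; field; have := hpow y; lra.
Qed.

Variable k : nat.

Fixpoint vote_all (es : seq 'I_m) (acc : {set 'I_m}) : alg m :=
  if es is e :: es' then vote e k 0 0 (fun b => vote_all es' (if b then e |: acc else acc))
  else Output (spanning_subtree ends acc).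

Lemma vote_all_queries es acc : (queries (vote_all es acc) <= size es * k)%N.
Proof.
elim: es acc => [|e es IH] acc //=.
by rewrite mulSn; apply: vote_queries => b; apply: IH.
Qed.

Lemma vote_all_success es acc : (mgf p z ^ k <= 1)%R ->
  ((1 - mgf p z ^ k) ^ size es
     * success p ends Real (Output (spanning_subtree ends (acc :|: [set x in es | x \in Real])))
   <= success p ends Real (vote_all es acc))%R.
Proof.
move=> hk; elim: es acc => [|e es IH] acc.
  rewrite [size _]/= Rmult_1_l; apply: Req_le.
  by congr (success _ _ _ (Output (spanning_subtree _ _))); apply/setP => x; rewrite !inE orbF.
rewrite (_ : acc :|: _ = (if e \in Real then e |: acc else acc) :|: [set x in es | x \in Real]).
  have := vote_success e (fun b => vote_all es (if b then e |: acc else acc)) k 0 0.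
  move=> H; simpl in H; rewrite !if_same /= /Rdiv Rinv_1 !Rmult_1_r in H.
  apply: Rle_trans H.
  rewrite [size _]/= -tech_pow_Rmult Rmult_assoc; apply: Rmult_le_compat_l; first lra.
  exact: IH.
apply/setP => x; rewrite !inE; case: (eqVneq x e) => [->|nxe]; case: (e \in Real);
  by rewrite ?inE ?eqxx /= ?andbT ?andbF ?orbT ?orbF // (negbTE nxe).
Qed.

End MajorityVote.

Lemma mgf_sqrt_ratio p : (0 < p < 1)%R ->
  (mgf p (sqrt (p / (1 - p))) ^ 2 = 4 * p * (1 - p))%R.
Proof.
move=> hp; have hq : (0 <= p / (1 - p))%R by apply: Rle_mult_inv_pos; lra.
have hz := sqrt_sqrt _ hq; have := sqrt_lt_R0 (p / (1 - p)) ltac:(apply: Rdiv_lt_0_compat; lra).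
set z := sqrt _ => hz0; rewrite /mgf /=.
have -> : (((1 - p) * z + p / z) * (((1 - p) * z + p / z) * 1)
           = (1 - p) ^ 2 * (z * z) + 2 * p * (1 - p) + p ^ 2 / (z * z))%R by field; lra.
by rewrite hz; field; lra.
Qed.

Lemma sqrt_ratio_bounds p : (0 < p <= 1/2)%R -> (0 < sqrt (p / (1 - p)) <= 1)%R.
Proof.
move=> hp; split; first by apply: sqrt_lt_R0; apply: Rdiv_lt_0_compat; lra.
rewrite -[X in (_ <= X)%R]sqrt_1; apply: sqrt_le_1_alt.
apply: (Rle_trans _ ((1 - p) / (1 - p))); last by right; field; lra.
by apply: Rmult_le_compat_r; [apply/Rlt_le/Rinv_0_lt_compat | ]; lra.
Qed.

(* As Reals is imported after ssrnat, [^] in [nat_scope] is [Nat.pow], not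
   [expn]. *)
Lemma INR_pow2 k : INR (2 ^ k) = (2 ^ k)%R.
Proof. by rewrite pow_INR. Qed.

Lemma INR_expn2 k : INR (expn 2 k) = (2 ^ k)%R.
Proof. by elim: k => // k IH; rewrite expnS mult_INR IH. Qed.

Lemma log2_bounds m : (0 < m)%N -> (2 ^ Nat.log2 m <= m < 2 ^ (Nat.log2 m).+1)%N.
Proof. by move=> /ltP /Nat.log2_spec [/leP h1 /ltP h2]; rewrite h1 h2. Qed.

Lemma ln_le x y : (0 < x)%R -> (x <= y)%R -> (ln x <= ln y)%R.
Proof. by move=> hx [hxy | <-]; [left; apply: ln_increasing | right]. Qed.

Lemma log2S_le_3ln m : (3 <= m)%N -> (INR (Nat.log2 m).+1 <= 3 * ln (INR m))%R.
Proof.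
move=> hm; have hm3 : (INR 3 <= INR m)%R by apply/le_INR/leP.
simpl in hm3.
have h1 : (1 <= ln (INR m))%R.
  rewrite -(ln_exp 1); apply: ln_le; [exact: exp_pos | have := exp_le_3; lra].
have h2 : (INR (Nat.log2 m) * ln 2 <= ln (INR m))%R.
  rewrite -ln_pow; last lra.
  apply: ln_le; first by apply: pow_lt; lra.
  rewrite -INR_pow2; apply: le_INR; apply/leP.
  by case/andP: (log2_bounds (ltac:(lia) : (0 < m)%N)).
have := ln_lt_2; have := pos_INR (Nat.log2 m); rewrite S_INR; nra.
Qed.

Lemma INR_div_pow4_log2 m : (INR m / 4 ^ (Nat.log2 m).+1 <= / INR m.+1)%R.
Proof.
set s := (Nat.log2 m).+1.
have hs : (INR m.+1 <= 2 ^ s)%R.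
  rewrite -INR_pow2; apply: le_INR; apply/leP.
  by case: m @s => [|m] //=; case/andP: (log2_bounds (ltn0Sn m)).
have h4 : (4 ^ s = 2 ^ s * 2 ^ s)%R by rewrite -Rpow_mult_distr; do 2 f_equal; lra.
have hm := pos_INR m; rewrite S_INR in hs *.
rewrite h4; apply: (Rle_trans _ (INR m / ((INR m + 1) * (INR m + 1)))).
  apply: Rmult_le_compat_l => //; apply: Rinv_le_contravar; nra.
apply: (Rmult_le_reg_r ((INR m + 1) * (INR m + 1))); first nra.
by rewrite /Rdiv Rmult_assoc Rinv_l; [rewrite Rmult_1_r; field_simplify; nra | nra].
Qed.

Lemma inv_INR_S_cv : Un_cv (fun m => / INR m.+1)%R 0.
Proof.
move=> eps heps; have [N [hN hN0]] := archimed_cor1 eps heps.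
exists N => k hk; rewrite /R_dist Rminus_0_r Rabs_right; last first.
  by apply/Rle_ge/Rlt_le/Rinv_0_lt_compat/lt_0_INR; lia.
apply: Rle_lt_trans hN; apply: Rinv_le_contravar; first exact: lt_0_INR.
by apply: le_INR; lia.
Qed.

Theorem upper_bound (p : R) (hp : (0 < p < 1/2)%R) :
  exists (C : R) (M : nat) (eps : nat -> R),
     Un_cv eps 0 /\
     forall (n m : nat) (ends : 'I_m -> 'I_n * 'I_n),
       simple_graph ends -> (M <= m)%N ->
       exists A : alg m,
         (INR (queries A) <= C * INR m * ln (INR m))%R /\
         forall Real : {set 'I_m}, spanning_connected ends Real ->
           (1 - eps m <= success p ends Real A)%R.
Proof.
set z := sqrt (p / (1 - p)); have hz : (0 < z <= 1)%R by apply: sqrt_ratio_bounds; lra.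
set r := (4 * p * (1 - p))%R; have hr : (0 < r < 1)%R by rewrite /r; nra.
have [L hL] := pow_lt_1_zero r ltac:(rewrite Rabs_right; lra) (/ 4) ltac:(lra).
have {}hL : (0 <= r ^ L <= / 4)%R.
  have := hL L (le_n _); rewrite Rabs_right; last by apply/Rle_ge/pow_le; lra.
  by have := pow_le r L ltac:(lra); lra.
exists (6 * INR L)%R, 3, (fun m => / INR m.+1)%R; split; first exact: inv_INR_S_cv.
move=> n m ends _ hm; set s := (Nat.log2 m).+1; set k := (2 * (L * s))%N.
have hX : (0 <= mgf p z ^ k <= / 4 ^ s)%R.
  rewrite /k pow_mult mgf_sqrt_ratio; last lra.
  rewrite -/r pow_mult -pow_inv; split; first by apply: pow_le; lra.
  exact: pow_incr.
have hX1 : (mgf p z ^ k <= 1)%R.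
  by have := pow_le1 s (ltac:(lra) : (0 <= / 4 <= 1)%R); rewrite pow_inv; lra.
exists (vote_all ends k (enum 'I_m) set0); split.
- apply: (Rle_trans _ (INR (m * k))).
    by apply/le_INR/leP; have := vote_all_queries ends k (enum 'I_m) set0; rewrite size_enum_ord.
  have hLm : (0 <= INR L * INR m)%R by apply: Rmult_le_pos; apply: pos_INR.
  have := Rmult_le_compat_l _ _ _ hLm (log2S_le_3ln hm).
  by rewrite /k !mult_INR -/s (_ : INR 2 = 2%R) //; lra.
- move=> Real hReal.
  have := vote_all_success ends (ltac:(lra) : (0 <= p <= 1)%R) Real hz (enum 'I_m) set0 hX1.
  rewrite size_enum_ord (_ : set0 :|: _ = Real); last by apply/setP => x; rewrite !inE mem_enum.
  case/andP: (spanning_subtreeP hReal) => htree hsub.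
  rewrite [success _ _ _ (Output _)]/= htree hsub Rmult_1_r.
  have := one_sub_pow_ge m (ltac:(lra) : (0 <= mgf p z ^ k <= 1)%R).
  have := Rmult_le_compat_l _ _ _ (pos_INR m) (proj2 hX).
  by have := INR_div_pow4_log2 m; rewrite -/s /Rdiv; lra.
Qed.

(** * The gadget potential *)

Section Potential.
Variables (p : R) (K : nat).
Hypothesis hp : (0 < p < 1/2)%R.

Definition rho : R := (p / (1 - p))%R.
Definition epsK : R := (rho ^ K * (1 - rho) / rho)%R.
Definition lam : R := (1 + epsK)%R.

(* If the two answer counts of a gadget are [a] and [a + d], the likelihoods
   of the two values of its hidden bit sum to
   [(p (1 - p)) ^ a (1 - p) ^ d (1 + rho ^ d)].  Dividing by [lam ^ (K - d)]
   gives a potential that still dominates each likelihood ([J_ge1]) but grows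
   at most by the factor [lam] per query ([pot_step]). *)
Definition J (d : nat) : R := ((1 + rho ^ d) / lam ^ (K - d))%R.
Definition Gk (a d : nat) : R := ((p * (1 - p)) ^ a * (1 - p) ^ d * J d)%R.
Definition pot (y w : nat) : R := Gk (minn y w) (maxn y w - minn y w).
Definition lik (y w : nat) (b : bool) : R :=
  if b then ((1 - p) ^ y * p ^ w)%R else (p ^ y * (1 - p) ^ w)%R.

Lemma rho_bounds : (0 < rho < 1)%R.
Proof.
rewrite /rho; split; first by apply: Rdiv_lt_0_compat; lra.
by apply: (Rmult_lt_reg_r (1 - p)); [lra | rewrite /Rdiv Rmult_assoc Rinv_l; lra].
Qed.

Lemma rho_pow_bounds d : (0 < rho ^ d <= 1)%R.
Proof.
have hr := rho_bounds; split; first by apply: pow_lt; lra.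
by rewrite -(pow1 d); apply: pow_incr; lra.
Qed.

Lemma epsK_gt0 : (0 < epsK)%R.
Proof.
have hr := rho_bounds; have hK := rho_pow_bounds K.
by apply: Rdiv_lt_0_compat; [apply: Rmult_lt_0_compat |]; lra.
Qed.

Lemma lam_ge1 : (1 <= lam)%R.
Proof. by have := epsK_gt0; rewrite /lam; lra. Qed.

Lemma lam_pow_gt0 j : (0 < lam ^ j)%R.
Proof. by apply: pow_lt; have := lam_ge1; lra. Qed.

Lemma lam_pow_mono a b : (a <= b)%N -> (lam ^ a <= lam ^ b)%R.
Proof. by move=> /leP; apply: Rle_pow; apply: lam_ge1. Qed.

Lemma rho_lam_sub1 : (rho * (lam - 1) = rho ^ K * (1 - rho))%R.
Proof. by have hr := rho_bounds; rewrite /lam /epsK; field; lra. Qed.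

Lemma rho_pow_lam_pow j : (rho ^ j * (lam ^ j - 1) <= rho ^ K * (1 - rho ^ j))%R.
Proof.
have hr := rho_bounds; have hK := rho_pow_bounds K; have hl := lam_ge1.
have hrl : (rho * lam <= 1)%R by have := rho_lam_sub1; nra.
elim: j => [|j IH] /=; first lra.
have hj := rho_pow_bounds j; have hlj : (1 <= lam ^ j)%R by apply: (lam_pow_mono (leq0n j)).
have h1 : (0 <= rho ^ j * (lam ^ j - 1))%R by nra.
have E : (rho * rho ^ j * (lam * lam ^ j - 1)
          = rho * lam * (rho ^ j * (lam ^ j - 1)) + rho ^ j * (rho * (lam - 1)))%R by ring.
by rewrite E rho_lam_sub1; nra.
Qed.

Lemma J_ge1 d : (1 <= J d)%R.
Proof.
have hl := lam_pow_gt0 (K - d); rewrite /J.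
apply: (Rmult_le_reg_r (lam ^ (K - d))) => //.
rewrite /Rdiv Rmult_assoc Rinv_l ?Rmult_1_r ?Rmult_1_l; last lra.
have hd := rho_pow_bounds d; case: (leqP K d) => hKd.
  by rewrite (_ : K - d = 0)%N /=; [lra | lia].
have := rho_pow_lam_pow (K - d).
have -> : (rho ^ K = rho ^ (K - d) * rho ^ d)%R by rewrite -pow_add; congr (pow _ _); lia.
have := rho_pow_bounds (K - d); nra.
Qed.

Lemma lam_pow_pred a b : (a <= b.+1)%N -> (/ lam ^ b <= lam / lam ^ a)%R.
Proof.
move=> hab; have ha := lam_pow_gt0 a; have hb := lam_pow_gt0 b.
have := lam_pow_mono hab; rewrite /= => h.
apply: (Rmult_le_reg_r (lam ^ a * lam ^ b)); first nra.
have -> : (/ lam ^ b * (lam ^ a * lam ^ b) = lam ^ a)%R by field; lra.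
by have -> : (lam / lam ^ a * (lam ^ a * lam ^ b) = lam * lam ^ b)%R by field; lra.
Qed.

Lemma lam_pow_inv_mono a b : (a <= b)%N -> (/ lam ^ b <= / lam ^ a)%R.
Proof. by move=> hab; apply: Rinv_le_contravar; [apply: lam_pow_gt0 | apply: lam_pow_mono]. Qed.

Lemma J_step0 : (2 * (1 - p) * J 1 <= lam * J 0)%R.
Proof.
have E : ((1 - p) * (1 + rho) = 1)%R by rewrite /rho; field; lra.
have := lam_pow_pred (a := K) (b := K - 1) ltac:(lia).
rewrite /J subn0 /= Rmult_1_r => h.
have -> : (2 * (1 - p) * ((1 + rho) / lam ^ (K - 1))
           = 2 * ((1 - p) * (1 + rho)) * / lam ^ (K - 1))%R by rewrite /Rdiv; ring.
have -> : (lam * ((1 + 1) / lam ^ K) = 2 * (lam / lam ^ K))%R by field; have := lam_pow_gt0 K; lra.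
rewrite E; lra.
Qed.

Lemma J_step d : ((1 - p) * J d.+2 + p * J d <= lam * J d.+1)%R.
Proof.
have hr := rho_bounds; have hd := rho_pow_bounds d; rewrite /J /Rdiv.
have s1 := lam_pow_pred (a := K - d.+1) (b := K - d.+2) ltac:(lia).
have s2 : (/ lam ^ (K - d) <= lam * / lam ^ (K - d.+1))%R.
  apply: Rle_trans (lam_pow_inv_mono (a := K - d.+1) (b := K - d) ltac:(lia)) _.
  have := Rinv_0_lt_compat _ (lam_pow_gt0 (K - d.+1)); have := lam_ge1; nra.
have E : ((1 - p) * (1 + rho ^ d.+2) + p * (1 + rho ^ d) = 1 + rho ^ d.+1)%R.
  by rewrite /= /rho; field; lra.
rewrite -E; have h2 : (0 <= 1 + rho ^ d.+2)%R by have := rho_pow_bounds d.+2; lra.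
have := Rmult_le_compat_l _ _ _ h2 s1; have := Rmult_le_compat_l _ _ _ (Rlt_le _ _ (proj1 hd)) s2.
rewrite /Rdiv in s1; nra.
Qed.

Lemma Gk_ge0 a d : (0 <= Gk a d)%R.
Proof.
have := J_ge1 d; rewrite /Gk => hJ.
by apply: Rmult_le_pos; [apply: Rmult_le_pos; apply: pow_le; nra | lra].
Qed.

Lemma Gk_step a d : (Gk a d.+2 + Gk a.+1 d <= lam * Gk a d.+1)%R.
Proof.
set X := ((p * (1 - p)) ^ a * (1 - p) ^ d.+1)%R.
have hX : (0 <= X)%R by apply: Rmult_le_pos; apply: pow_le; nra.
have -> : (Gk a d.+2 + Gk a.+1 d = X * ((1 - p) * J d.+2 + p * J d))%R by rewrite /Gk /X /=; ring.
have -> : (lam * Gk a d.+1 = X * (lam * J d.+1))%R by rewrite /Gk /X /=; ring.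
exact: Rmult_le_compat_l (J_step d).
Qed.

Lemma Gk_step0 a : (Gk a 1 + Gk a 1 <= lam * Gk a 0)%R.
Proof.
set X := ((p * (1 - p)) ^ a)%R.
have hX : (0 <= X)%R by apply: pow_le; nra.
have -> : (Gk a 1 + Gk a 1 = X * (2 * (1 - p) * J 1))%R by rewrite /Gk /X /=; ring.
have -> : (lam * Gk a 0 = X * (lam * J 0))%R by rewrite /Gk /X /=; ring.
exact: Rmult_le_compat_l J_step0.
Qed.

Lemma pot_ge0 y w : (0 <= pot y w)%R.
Proof. exact: Gk_ge0. Qed.

Lemma potC y w : pot y w = pot w y.
Proof. by rewrite /pot minnC maxnC. Qed.

Lemma pot_addr y d : pot y (y + d) = Gk y d.
Proof. by rewrite /pot (minn_idPl (leq_addr d y)) (maxn_idPr (leq_addr d y)) addKn. Qed.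

Lemma pot_step y w : (pot y.+1 w + pot y w.+1 <= lam * pot y w)%R.
Proof.
wlog hyw : y w / (y <= w)%N.
  move=> Hwlog; case: (leqP y w) => [|/ltnW hwy]; first exact: Hwlog.
  by rewrite potC (potC y) (potC y w) Rplus_comm; apply: Hwlog.
have [d ->] : exists d, w = (y + d)%N by exists (w - y); rewrite subnKC.
rewrite pot_addr; case: d => [|d].
  by rewrite addn0 potC -addn1 (pot_addr y 1); apply: Gk_step0.
rewrite -addnS (pot_addr y d.+2) -addSnnS (pot_addr y.+1 d) Rplus_comm.
exact: Gk_step.
Qed.

Lemma likC y w b : lik y w b = lik w y (~~ b).
Proof. by case: b; rewrite /lik /= Rmult_comm. Qed.

Lemma lik_ge0 y w b : (0 <= lik y w b)%R.
Proof. by case: b; apply: Rmult_le_pos; apply: pow_le; lra. Qed.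

Lemma lik_le_pot y w b : (lik y w b <= pot y w)%R.
Proof.
wlog hyw : y w b / (y <= w)%N.
  move=> Hwlog; case: (leqP y w) => [|/ltnW hwy]; first exact: Hwlog.
  by rewrite likC potC; apply: Hwlog.
have [d ->] : exists d, w = (y + d)%N by exists (w - y); rewrite subnKC.
rewrite pot_addr /Gk /lik.
have hJ := J_ge1 d; have hp1 : (0 <= (p * (1 - p)) ^ y * (1 - p) ^ d)%R.
  by apply: Rmult_le_pos; apply: pow_le; nra.
apply: (Rle_trans _ ((p * (1 - p)) ^ y * (1 - p) ^ d)); last nra.
rewrite !pow_add Rpow_mult_distr; case: b.
- have := pow_incr p (1 - p) d ltac:(lra).
  have : (0 <= (1 - p) ^ y * p ^ y)%R by apply: Rmult_le_pos; apply: pow_le; lra.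
  nra.
- by apply: Req_le; ring.
Qed.

Lemma pot00 : pot 0 0 = (2 / lam ^ K)%R.
Proof. by rewrite /pot /Gk /J /= subn0 /Rdiv; ring. Qed.

End Potential.

(** * Likelihood-weighted success *)

Section RealSums.
Variable I : finType.
Implicit Types F G : I -> R.

Lemma rsum_le F G : (forall i, F i <= G i)%R ->
  (\big[Rplus/0%R]_(i : I) F i <= \big[Rplus/0%R]_(i : I) G i)%R.
Proof.
move=> hFG; apply: (big_ind2 (fun x y => x <= y)%R) => [|x1 x2 y1 y2|i _]; [lra | lra | exact: hFG].
Qed.

Lemma rsum_const c : \big[Rplus/0%R]_(i : I) c = (INR #|I| * c)%R.
Proof.
rewrite big_const cardE; elim: (enum I) => [|x s IH]; first by rewrite /=; ring.
by rewrite [size _]/= iterS IH S_INR; ring.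
Qed.

Lemma rprod_ge0 (P : pred I) F : (forall i, 0 <= F i)%R ->
  (0 <= \big[Rmult/1%R]_(i | P i) F i)%R.
Proof. by move=> hF; apply: (big_ind (fun x => 0 <= x)%R) => [|x y|i _]; [lra | apply: Rmult_le_pos | ]. Qed.

Lemma rprod_le F G : (forall i, 0 <= F i <= G i)%R ->
  (\big[Rmult/1%R]_(i : I) F i <= \big[Rmult/1%R]_(i : I) G i)%R.
Proof.
move=> hFG; suff : (0 <= \big[Rmult/1%R]_(i : I) F i <= \big[Rmult/1%R]_(i : I) G i)%R by case.
apply: (big_ind2 (fun x y => 0 <= x <= y)%R) => [|x1 x2 y1 y2 h1 h2|i _]; first lra.
- by split; [nra | apply: Rmult_le_compat; lra].
- exact: hFG.
Qed.

End RealSums.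

Lemma rprod_const_ord k (a : R) : \big[Rmult/1%R]_(i < k) a = (a ^ k)%R.
Proof. by rewrite big_const_ord; elim: k => //= k ->. Qed.

Definition bump N (f : 'I_N -> nat) (i : 'I_N) : 'I_N -> nat :=
  fun j => if j == i then (f j).+1 else f j.

Lemma rprod_bump N (F : 'I_N -> nat -> R) f i :
  \big[Rmult/1%R]_j F j (bump f i j)
  = (F i (f i).+1 * \big[Rmult/1%R]_(j | j != i) F j (f j))%R.
Proof. by rewrite (bigD1 i) //= /bump eqxx; congr (_ * _)%R; apply: eq_bigr => j /negbTE ->. Qed.

Section WeightedSuccess.
Variables (p : R) (K N n m : nat) (ends : 'I_m -> 'I_n * 'I_n).
Hypothesis hp : (0 < p < 1/2)%R.
Variables (Real : {ffun 'I_N -> bool} -> {set 'I_m}) (label : 'I_m -> option ('I_N * bool)).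
Hypothesis Real_label : forall e X,
  (e \in Real X) = if label e is Some (i, b) then X i == b else true.
Hypothesis tree_determines : forall T X X',
  spanning_tree ends T -> T \subset Real X -> T \subset Real X' -> X = X'.

Definition lik_all (y w : 'I_N -> nat) (X : {ffun 'I_N -> bool}) : R :=
  \big[Rmult/1%R]_i lik p (y i) (w i) (X i).
Definition pot_all (y w : 'I_N -> nat) : R := \big[Rmult/1%R]_i pot p K (y i) (w i).

(* Up to normalization, [wsucc A y w] is the success probability of [A] on a
   uniformly random state [X], conditioned on having seen, in each gadget [i],
   [y i] answers pointing to [X i = true] and [w i] pointing to [X i = false]. *)
Definition wsucc (A : alg m) (y w : 'I_N -> nat) : R :=
  \big[Rplus/0%R]_X (lik_all y w X * success p ends (Real X) A)%R.

Lemma lik_all_le y w X : (lik_all y w X <= pot_all y w)%R.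
Proof. by apply: rprod_le => i; split; [apply: lik_ge0 | apply: lik_le_pot]; lra. Qed.

Lemma pot_all_ge0 y w : (0 <= pot_all y w)%R.
Proof. by apply: rprod_ge0 => i; apply: pot_ge0; lra. Qed.

Lemma lik_all_bumpl y w X i :
  lik_all (bump y i) w X = (lik_all y w X * (if X i then 1 - p else p))%R.
Proof.
rewrite /lik_all (rprod_bump (fun j a => lik p a (w j) (X j))) [in RHS](bigD1 i) //=.
by rewrite /lik; case: (X i) => /=; ring.
Qed.

Lemma lik_all_bumpr y w X i :
  lik_all y (bump w i) X = (lik_all y w X * (if X i then p else 1 - p))%R.
Proof.
rewrite /lik_all (rprod_bump (fun j a => lik p (y j) a (X j))) [in RHS](bigD1 i) //=.
by rewrite /lik; case: (X i) => /=; ring.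
Qed.

Lemma pot_all_step y w i :
  (pot_all (bump y i) w + pot_all y (bump w i) <= lam p K * pot_all y w)%R.
Proof.
rewrite /pot_all (rprod_bump (fun j a => pot p K a (w j))).
rewrite (rprod_bump (fun j a => pot p K (y j) a)) [in X in (_ <= X)%R](bigD1 i) //=.
set Q := \big[Rmult/1%R]_(j | j != i) _.
have hQ : (0 <= Q)%R by apply: rprod_ge0 => j; apply: pot_ge0.
have := Rmult_le_compat_r _ _ _ hQ (pot_step K hp (y i) (w i)); lra.
Qed.

Lemma wsucc_Output T y w : (wsucc (Output T) y w <= pot_all y w)%R.
Proof.
rewrite /wsucc /=.
case: (pickP (fun X => spanning_tree ends T && (T \subset Real X))) => [X0 hX0 | hnone].
- rewrite (bigD1 X0) //= hX0 big1 => [|X /negbTE hX].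
    by rewrite Rmult_1_r Rplus_0_r; apply: lik_all_le.
  case: ifP => [/andP [htree hT] | _]; last ring.
  by case/andP: hX0 => _ hT0; rewrite (tree_determines htree hT hT0) eqxx in hX.
- rewrite big1 => [|X _]; first exact: pot_all_ge0.
  by rewrite hnone Rmult_0_r.
Qed.

(* a Yes answer on an edge labelled [(i, b)] is evidence for [X i = b] *)
Lemma wsucc_Query_label e k i b y w : label e = Some (i, b) ->
  wsucc (Query e k) y w =
  (wsucc (k true) (if b then bump y i else y) (if b then w else bump w i)
   + wsucc (k false) (if b then y else bump y i) (if b then bump w i else w))%R.
Proof.
move=> he; rewrite /wsucc -big_split; apply: eq_bigr => X _ /=.
rewrite Real_label he {he}.
by case: b; rewrite ?lik_all_bumpl ?lik_all_bumpr; case: (X i); rewrite ?eqb_id ?eqbF_neg /=; ring.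
Qed.

Lemma wsucc_Query_nolabel e k y w : label e = None ->
  wsucc (Query e k) y w = ((1 - p) * wsucc (k true) y w + p * wsucc (k false) y w)%R.
Proof.
move=> he; rewrite /wsucc !big_distrr -big_split; apply: eq_bigr => X _ /=.
by rewrite Real_label he /=; ring.
Qed.

Lemma wsucc_Coin q k y w : wsucc (Coin q k) y w
  = (clamp01 q * wsucc (k true) y w + (1 - clamp01 q) * wsucc (k false) y w)%R.
Proof. by rewrite /wsucc !big_distrr -big_split; apply: eq_bigr => X _ /=; ring. Qed.

Lemma wsucc_le A B y w : (queries A <= B)%N ->
  (wsucc A y w <= lam p K ^ B * pot_all y w)%R.
Proof.
have hl := lam_ge1 K hp; have hlB B' : (0 <= lam p K ^ B')%R by apply: pow_le; lra.
elim: A B y w => [T|e k IH|q k IH] B y w /= hB.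
- apply: Rle_trans (wsucc_Output T y w) _.
  have := pot_all_ge0 y w; have : (1 <= lam p K ^ B)%R by rewrite -(pow1 B); apply: pow_incr; lra.
  nra.
- case: B hB => [|B] //; rewrite ltnS geq_max => /andP [hB1 hB2].
  have IHt := IH true B; have IHf := IH false B; rewrite -tech_pow_Rmult.
  case he: (label e) => [[i b]|].
  + rewrite (wsucc_Query_label k y w he) {he}.
    have := Rmult_le_compat_l _ _ _ (hlB B) (pot_all_step y w i).
    case: b => /=.
    * by have := IHt (bump y i) w hB1; have := IHf y (bump w i) hB2; lra.
    * by have := IHt y (bump w i) hB1; have := IHf (bump y i) w hB2; lra.
  + rewrite (wsucc_Query_nolabel k y w he).
    have h0 : (0 <= lam p K ^ B * pot_all y w)%R by apply: Rmult_le_pos => //; apply: pot_all_ge0.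
    have := IHt y w hB1; have := IHf y w hB2; nra.
- rewrite geq_max in hB; case/andP: hB => hB1 hB2; rewrite wsucc_Coin.
  have := IH true B y w hB1; have := IH false B y w hB2; have := clamp01_bounds q.
  have := Rmult_le_pos _ _ (hlB B) (pot_all_ge0 y w); nra.
Qed.

Lemma lik_all0 X : lik_all (fun=> 0%N) (fun=> 0%N) X = 1%R.
Proof. by rewrite /lik_all big1 // => i _; rewrite /lik; case: (X i); rewrite /=; ring. Qed.

Lemma pot_all0 : pot_all (fun=> 0%N) (fun=> 0%N) = (2 ^ N / lam p K ^ (N * K))%R.
Proof.
rewrite /pot_all pot00 rprod_const_ord /Rdiv Rpow_mult_distr pow_inv -pow_mult.
by rewrite (mulnC N K).
Qed.

(* Averaged over the [2 ^ N] states, the success probability is at most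
   [lam ^ B / lam ^ (N K)] by [wsucc_le]. *)
Lemma exists_unlikely_state A delta : (0 < delta < 1/2)%R ->
  (2 * lam p K ^ queries A <= lam p K ^ (N * K))%R ->
  exists X, (success p ends (Real X) A < 1 - delta)%R.
Proof.
move=> hd hgap; apply: NNPP => /not_ex_all_not hall.
have hNK := lam_pow_gt0 K hp (N * K); have h2N : (0 < 2 ^ N)%R by apply: pow_lt; lra.
have := wsucc_le (fun=> 0%N) (fun=> 0%N) (leqnn (queries A)); rewrite pot_all0 /wsucc.
set none := fun=> 0%N; have : (INR #|{ffun 'I_N -> bool}| * (1 - delta)
  <= \big[Rplus/0%R]_X (lik_all none none X * success p ends (Real X) A))%R.
  by rewrite -rsum_const; apply: rsum_le => X; rewrite lik_all0 Rmult_1_l; apply: Rnot_lt_le.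
rewrite card_ffun card_bool card_ord INR_expn2 => hlow hup.
have : (lam p K ^ queries A * (2 ^ N / lam p K ^ (N * K)) <= 2 ^ N / 2)%R.
  apply: (Rmult_le_reg_r (lam p K ^ (N * K))) => //.
  rewrite (_ : _ * (2 ^ N / _) * _ = lam p K ^ queries A * 2 ^ N)%R; last by field; lra.
  nra.
nra.
Qed.

End WeightedSuccess.

(** * The gadget graph *)

Section GadgetGraph.
Variables (N' m : nat).
Local Notation N := N'.+1.
Hypothesis hNm : (3 * N <= m)%N.

(* Vertex 0 is a hub; gadget [q < N] is the triangle on 0, 2q+1 and 2q+2 with
   edges 3q, 3q+1 and 3q+2, of which 3q+1 is realized iff the hidden bit
   [X q] holds and 3q+2 iff it does not; the other edges are pendant. *)
Definition gadget_ends (e : nat) : nat * nat :=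
  if (e < 3 * N)%N then
    if e %% 3 == 0 then (0, 2 * (e %/ 3) + 1)
    else if e %% 3 == 1 then (0, 2 * (e %/ 3) + 2)
    else (2 * (e %/ 3) + 1, 2 * (e %/ 3) + 2)
  else (0, e - N + 1)%N.

Definition gadget_label (e : nat) : option (nat * bool) :=
  if (e < 3 * N) && (e %% 3 != 0) then Some (e %/ 3, e %% 3 == 1) else None.

Variant gadget_spec (e : nat) : nat * nat -> option (nat * bool) -> Type :=
| GadgetSpoke q of (q < N)%N & e = (3 * q)%N :
    gadget_spec e (0, 2 * q + 1)%N None
| GadgetTrue q of (q < N)%N & e = (3 * q + 1)%N :
    gadget_spec e (0, 2 * q + 2)%N (Some (q, true))
| GadgetFalse q of (q < N)%N & e = (3 * q + 2)%N :
    gadget_spec e (2 * q + 1, 2 * q + 2)%N (Some (q, false))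
| Pendant of (3 * N <= e)%N : gadget_spec e (0, e - N + 1)%N None.

Lemma gadgetP e : gadget_spec e (gadget_ends e) (gadget_label e).
Proof.
rewrite /gadget_ends /gadget_label; case: ltnP => he /=; last exact: Pendant.
have := ltn_pmod e (isT : 0 < 3)%N; have := divn_eq e 3.
case: (e %% 3) => [|[|[|r]]] //= eq _.
- by apply: GadgetSpoke; lia.
- by apply: GadgetTrue; lia.
- by apply: GadgetFalse; lia.
Qed.

Lemma gadget_ends_bounds e : (e < m)%N ->
  ((gadget_ends e).1 < (gadget_ends e).2 <= m - N)%N.
Proof. by move=> he; case: gadgetP => [q hq eq|q hq eq|q hq eq|hN] /=; lia. Qed.

Lemma gadget_ends_inj e1 e2 : gadget_ends e1 = gadget_ends e2 -> e1 = e2.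
Proof.
case: gadgetP => [q1 hq1 eq1|q1 hq1 eq1|q1 hq1 eq1|h1];
case: gadgetP => [q2 hq2 eq2|q2 hq2 eq2|q2 hq2 eq2|h2] [] //; lia.
Qed.

Lemma gadget_label_incident e i : (i < N)%N ->
  ((gadget_ends e).1 = 2 * i + 2 \/ (gadget_ends e).2 = 2 * i + 2)%N ->
  exists b, gadget_label e = Some (i, b).
Proof.
move=> hi; case: gadgetP => [q hq _|q hq _|q hq _|hN] /= h; try lia.
- by exists true; congr (Some (_, _)); lia.
- by exists false; congr (Some (_, _)); lia.
Qed.

Local Notation V := 'I_(m - N).+1.

Definition gends (e : 'I_m) : V * V := (inord (gadget_ends e).1, inord (gadget_ends e).2).

Definition glabel (e : 'I_m) : option ('I_N * bool) :=
  if gadget_label e is Some (q, b) then Some (inord q, b) else None.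

Definition RealX (X : {ffun 'I_N -> bool}) : {set 'I_m} :=
  [set e | if glabel e is Some (i, b) then X i == b else true].

Lemma RealX_label e X : (e \in RealX X) = if glabel e is Some (i, b) then X i == b else true.
Proof. by rewrite inE. Qed.

Lemma inord_inj a b : (a <= m - N)%N -> (b <= m - N)%N -> (inord a : V) = inord b -> a = b.
Proof. by move=> ha hb /(congr1 (@nat_of_ord _)); rewrite !inordK. Qed.

Lemma gadget_simple : simple_graph gends.
Proof.
split=> [e | e1 e2].
- by have := gadget_ends_bounds (ltn_ord e) => hb /= /inord_inj; lia.
- have := gadget_ends_bounds (ltn_ord e1); have := gadget_ends_bounds (ltn_ord e2).
  move=> hb2 hb1 /= [[/inord_inj h1 /inord_inj h2] | [/inord_inj h1 /inord_inj h2]].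
  + apply/val_inj/gadget_ends_inj.
    by apply: injective_projections; [apply: h1 | apply: h2]; lia.
  + by move: h1 h2; lia.
Qed.

Lemma gadget_spoke q : (q < N)%N ->
  gadget_ends (3 * q) = (0, 2 * q + 1)%N /\ gadget_label (3 * q) = None.
Proof. by move=> hq; case: gadgetP => [q' _ eq|q' _ eq|q' _ eq|h]; try lia; have -> : q' = q by lia. Qed.

Lemma gadget_true q : (q < N)%N ->
  gadget_ends (3 * q + 1) = (0, 2 * q + 2)%N /\ gadget_label (3 * q + 1) = Some (q, true).
Proof. by move=> hq; case: gadgetP => [q' _ eq|q' _ eq|q' _ eq|h]; try lia; have -> : q' = q by lia. Qed.

Lemma gadget_false q : (q < N)%N ->
  gadget_ends (3 * q + 2) = (2 * q + 1, 2 * q + 2)%N /\ gadget_label (3 * q + 2) = Some (q, false).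
Proof. by move=> hq; case: gadgetP => [q' _ eq|q' _ eq|q' _ eq|h]; try lia; have -> : q' = q by lia. Qed.

Lemma gadget_pendant e : (3 * N <= e)%N ->
  gadget_ends e = (0, e - N + 1)%N /\ gadget_label e = None.
Proof. by move=> he; case: gadgetP => [q hq eq|q hq eq|q hq eq|h]; try lia. Qed.

Lemma connect_realized_edge (X : {ffun 'I_N -> bool}) e (he : (e < m)%N) :
  (if gadget_label e is Some (q, b) then X (inord q) == b else true) ->
  connect (adj gends (RealX X)) (inord (gadget_ends e).1) (inord (gadget_ends e).2).
Proof.
move=> hX; apply: connect1; apply/existsP; exists (Ordinal he).
by rewrite RealX_label /glabel /= eqxx orTb andbT; case: gadget_label hX => [[]|].
Qed.

Lemma connect_hub X (v : V) : connect (adj gends (RealX X)) (inord 0) v.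
Proof.
pose C a b := connect (adj gends (RealX X)) (inord a) (inord b).
have Cspoke q : (q < N)%N -> C 0 (2 * q + 1)%N.
  move=> hq; have [he hl] := gadget_spoke hq.
  by have := @connect_realized_edge X (3 * q); rewrite he hl /=; apply=> //; lia.
rewrite -[v]inord_val; have : (v <= m - N)%N by rewrite -ltnS.
move: (nat_of_ord v) => k hk; rewrite -/(C 0 k).
have [-> | k0] := eqVneq k 0; first exact: connect0.
case: (leqP k (2 * N)) => hkN; last first.
  have hpend : (3 * N <= k + N - 1)%N by lia.
  have [he hl] := gadget_pendant hpend.
  have := @connect_realized_edge X (k + N - 1); rewrite he hl /=.
  by rewrite (_ : k + N - 1 - N + 1 = k)%N; [apply=> //; lia | lia].
have [q hq [-> | ->]] : exists2 q, (q < N)%N & k = 2 * q + 1 \/ k = 2 * q + 2.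
- by exists (k.-1 %/ 2); lia.
- exact: Cspoke.
case hXq: (X (inord q)).
- have [he hl] := gadget_true hq; have := @connect_realized_edge X (3 * q + 1).
  by rewrite he hl /= hXq; apply=> //; lia.
- have [he hl] := gadget_false hq; have := @connect_realized_edge X (3 * q + 2).
  rewrite he hl /= hXq; move/(_ ltac:(lia) isT).
  exact: connect_trans (Cspoke q hq).
Qed.

Lemma gadget_connected X : spanning_connected gends (RealX X).
Proof.
apply/forallP => u; apply/forallP => v; apply: connect_trans (connect_hub X v).
by rewrite connect_adj_sym; apply: connect_hub.
Qed.

(* the vertex 2i+2 of gadget i is covered only by the two edges labelled i *)
Lemma gadget_tree_determines T X X' : spanning_tree gends T ->
  T \subset RealX X -> T \subset RealX X' -> X = X'.
Proof.
case/andP=> Tconn _ TX TX'; apply/ffunP => i; have hi := ltn_ord i.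
have := forallP (forallP Tconn (inord (2 * i + 2))) (inord 0).
case/connectP => -[/= _ /(congr1 (@nat_of_ord _)) | a s /= /andP [/existsP [e /andP [eT he]] _] _].
  by rewrite !inordK; lia.
have [b hb] : exists b, gadget_label e = Some (i : nat, b).
  apply: gadget_label_incident => //; have := gadget_ends_bounds (ltn_ord e) => hb.
  case/orP: he => /eqP [h1 h2]; [left; move/inord_inj: h1 | right; move/inord_inj: h2];
    by apply; lia.
have := subsetP TX e eT; have := subsetP TX' e eT.
by rewrite !RealX_label /glabel hb inord_val => /eqP -> /eqP ->.
Qed.

End GadgetGraph.

(** * The lower bound *)

Lemma ln2_lt1 : (ln 2 < 1)%R.
Proof.
have h2e : (2 < exp 1)%R by have := exp_ineq1 1 ltac:(lra); lra.
by have := ln_increasing 2 (exp 1) ltac:(lra) h2e; rewrite ln_exp.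
Qed.

Lemma ln_le_log2S m : (0 < m)%N -> (ln (INR m) <= INR (Nat.log2 m).+1)%R.
Proof.
move=> hm; have hm0 : (0 < INR m)%R by apply: lt_0_INR; apply/ltP.
have hlt : (INR m < 2 ^ (Nat.log2 m).+1)%R.
  by rewrite -INR_pow2; apply/lt_INR/ltP; case/andP: (log2_bounds hm).
have := ln_increasing _ _ hm0 hlt; rewrite ln_pow; last lra.
by have := ln2_lt1; have := pos_INR (Nat.log2 m).+1; nra.
Qed.

Lemma log2_divn_bounds lg L : (0 < L <= lg)%N ->
  [/\ 0 < lg %/ L, L * (lg %/ L) <= lg & lg < 2 * L * (lg %/ L)]%N.
Proof.
case/andP=> hL hLlg; have := divn_eq lg L; have := ltn_pmod lg hL.
have hK : (0 < lg %/ L)%N by rewrite divn_gt0.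
by move: (lg %/ L) (lg %% L) hK => K r hK hr hlg; split; nia.
Qed.

Lemma double_queries_lt L K N m B : (0 < L)%N ->
  (ln (INR m) <= 2 * INR L * INR K)%R -> (m <= 4 * N)%N ->
  (INR B < / (16 * INR L) * INR m * ln (INR m))%R -> (2 * B < N * K)%N.
Proof.
move=> hL hln hmN hB; apply/ltP/INR_lt; rewrite !mult_INR (_ : INR 2 = 2%R) //.
have hL0 : (0 < INR L)%R by apply/lt_0_INR/ltP.
have hmN' : (INR m <= 4 * INR N)%R by have := le_INR _ _ (elimT leP hmN); rewrite mult_INR /=; lra.
have hK : (0 <= INR K)%R := pos_INR K.
have : (INR B < / (16 * INR L) * INR m * (2 * INR L * INR K))%R.
  apply: (Rlt_le_trans _ _ _ hB); rewrite !Rmult_assoc; apply: Rmult_le_compat_l.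
    by apply/Rlt_le/Rinv_0_lt_compat; lra.
  by apply: Rmult_le_compat_l; [apply: pos_INR | rewrite -Rmult_assoc].
rewrite (_ : _ * (2 * INR L * INR K) = INR m * INR K / 8)%R; last by field; lra.
by have := Rmult_le_compat_r _ _ _ hK hmN'; lra.
Qed.

Lemma pow_sq_ge_inv (r : R) L K m : (0 < r)%R -> (1 <= 2 ^ L * (r * r))%R ->
  (2 ^ (L * K) <= m)%N -> (1 <= INR m * (r ^ K * r ^ K))%R.
Proof.
move=> hr hL hm.
have h1 : (1 <= 2 ^ (L * K) * (r ^ K * r ^ K))%R.
  rewrite -Rpow_mult_distr pow_mult -Rpow_mult_distr -(pow1 K); apply: pow_incr; lra.
have := le_INR _ _ (elimT leP hm); rewrite INR_pow2 => h2.
have hK : (0 <= r ^ K * r ^ K)%R by have := pow_lt r K hr; nra.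
by have := Rmult_le_compat_r _ _ _ hK h2; lra.
Qed.

Section LowerBoundArithmetic.
Variables (p : R) (K : nat).
Hypothesis hp : (0 < p < 1/2)%R.

Lemma epsK_mass N m : (0 < K)%N ->
  (1 <= INR m * (rho p ^ K * rho p ^ K))%R -> (m <= 4 * N)%N ->
  (64 / (((1 - rho p) / rho p) * ((1 - rho p) / rho p)) < INR m)%R ->
  (2 <= epsK p K * INR (N * K))%R.
Proof.
have hr := rho_bounds hp; set t := ((1 - rho p) / rho p)%R.
have ht : (0 < t)%R by apply: Rdiv_lt_0_compat; lra.
have -> : epsK p K = (rho p ^ K * t)%R by rewrite /epsK /t; field; lra.
set a := (rho p ^ K)%R; have ha0 : (0 < a)%R by apply: pow_lt; lra.
move=> hK ha hmN hmt; have hK1 : (1 <= INR K)%R by apply: (le_INR 1); apply/leP.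
have hN : (INR m <= 4 * INR N)%R by have := le_INR _ _ (elimT leP hmN); rewrite mult_INR /=; lra.
have htt : (64 < INR m * (t * t))%R.
  have htt0 : (0 < t * t)%R by nra.
  by have := Rmult_lt_compat_r _ _ _ htt0 hmt; rewrite /Rdiv Rmult_assoc Rinv_l => [h|]; lra.
have hm0 := pos_INR m; have hN0 := pos_INR N; have htt0 : (0 < t * t)%R by nra.
set y := (a * INR N * t)%R.
have hy0 : (0 <= y)%R by apply: Rmult_le_pos; [apply: Rmult_le_pos |]; lra.
have hy : (4 < y * y)%R.
  have hNt : (0 <= INR N * INR N * (t * t))%R by nra.
  have h1 : (INR N * INR N * (t * t) <= INR m * (y * y))%R.
    by have := Rmult_le_compat_r _ _ _ hNt ha; rewrite /y; lra.
  have h2 : (INR m * INR m * (t * t) <= 16 * (INR N * INR N * (t * t)))%R.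
    by have := Rmult_le_compat_r _ _ _ (Rlt_le _ _ htt0) (Rmult_le_compat _ _ _ _ hm0 hm0 hN hN); lra.
  have h3 : (64 * INR m < INR m * INR m * (t * t))%R by nra.
  nra.
rewrite mult_INR (_ : _ * t * _ = y * INR K)%R; last by rewrite /y; ring.
nra.
Qed.

Lemma lam_pow_gap B D : (2 * B < D)%N -> (2 <= epsK p K * INR D)%R ->
  (2 * lam p K ^ B <= lam p K ^ D)%R.
Proof.
move=> hBD hD; rewrite -(subnKC (ltnW (leq_ltn_trans (leq_pmull B (isT : 0 < 2)%N) hBD))).
rewrite pow_add; have hlB := lam_pow_gt0 K hp B.
suff : (2 <= lam p K ^ (D - B))%R by nra.
have := poly (D - B) _ (epsK_gt0 K hp); rewrite -/(lam p K).
have : (INR D <= 2 * INR (D - B))%R.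
  by rewrite (_ : 2 = INR 2)%R // -mult_INR; apply/le_INR/leP; lia.
have := epsK_gt0 K hp; nra.
Qed.

End LowerBoundArithmetic.

Lemma exists_pow2_sq_ge (r : R) : (0 < r)%R -> exists L, (0 < L)%N /\ (1 <= 2 ^ L * (r * r))%R.
Proof.
move=> hr; have hrr : (0 < r * r)%R by nra.
have [L0 hL0] := INR_archimed 1 (/ (r * r)) ltac:(lra).
exists L0.+1; split => //.
have hL : (INR L0.+1 <= 2 ^ L0.+1)%R.
  by rewrite -INR_pow2; apply/le_INR/Nat.lt_le_incl/Nat.pow_gt_lin_r.
have : (/ (r * r) * (r * r) = 1)%R by field; lra.
by rewrite S_INR in hL; nra.
Qed.

(* [N ~ m / 3] gadgets and [K = log2 m / L] with [2 ^ L rho ^ 2 >= 1], so that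
   [rho ^ K >= 1 / sqrt m] and the budget [m ln m / (16 L)] stays below
   [N K / 2]. *)
Theorem lower_bound (p : R) (hp : (0 < p < 1/2)%R) :
  forall delta : R, (0 < delta < 1/2)%R ->
   exists (c : R) (M : nat), (0 < c)%R /\
     forall m : nat, (M <= m)%N ->
       exists (n : nat) (ends : 'I_m -> 'I_n * 'I_n),
         simple_graph ends /\
         (exists Real0 : {set 'I_m}, spanning_connected ends Real0) /\
         forall A : alg m,
           (INR (queries A) < c * INR m * ln (INR m))%R ->
           exists Real : {set 'I_m},
             spanning_connected ends Real /\
             (success p ends Real A < 1 - delta)%R.
Proof.
move=> delta hd; have hr := rho_bounds hp.
have [L [hL hLr]] := exists_pow2_sq_ge (proj1 hr).
set t := ((1 - rho p) / rho p)%R; have ht : (0 < t)%R by apply: Rdiv_lt_0_compat; lra.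
have [M2 hM2] := INR_archimed 1 (64 / (t * t)) ltac:(lra).
exists (/ (16 * INR L))%R, (maxn (maxn 8 (2 ^ L)) M2); split.
  by apply: Rinv_0_lt_compat; have := lt_0_INR L (elimT ltP hL); lra.
move=> m; rewrite !geq_max => /andP [/andP [hm8 hmL] hmM2].
set N' := (m %/ 3).-1; have hNm : (3 * N'.+1 <= m)%N by rewrite /N'; lia.
have hmN : (m <= 4 * N'.+1)%N by rewrite /N'; lia.
exists (m - N'.+1).+1, (gends N' (m := m)); split; first exact: gadget_simple.
split; first by exists (@RealX N' m [ffun=> true]); apply: gadget_connected.
move=> A hA; set lg := Nat.log2 m; set K := (lg %/ L)%N.
have hLlg : (L <= lg)%N.
  apply/leP; rewrite -{1}(Nat.log2_pow2 L (Nat.le_0_l L)); apply: Nat.log2_le_mono; exact/leP.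
have [hK hLK hlgK] := log2_divn_bounds (ltac:(lia) : (0 < L <= lg)%N).
have hln : (ln (INR m) <= 2 * INR L * INR K)%R.
  apply: Rle_trans (ln_le_log2S (ltac:(lia) : (0 < m)%N)) _.
  by rewrite -(_ : INR 2 = 2%R) // -!mult_INR; apply/le_INR/leP.
have hmass : (2 <= epsK p K * INR (N'.+1 * K))%R.
  apply: (epsK_mass (N := N'.+1) (m := m) hp hK) => //.
  - apply: pow_sq_ge_inv (proj1 hr) hLr _; apply: leq_trans (proj1 (andP (log2_bounds _))); last lia.
    by apply/leP/Nat.pow_le_mono_r => //; apply/leP.
  - by rewrite -/t; have := le_INR _ _ (elimT leP hmM2); lra.
have [X hX] := exists_unlikely_state hp (@RealX_label N' m) (gadget_tree_determines hNm) hd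
  (lam_pow_gap hp (double_queries_lt hL hln hmN hA) hmass).
by exists (RealX m X); split; first exact: gadget_connected.
Qed.

Theorem theorem2 (p : R) (hp : (0 < p < 1/2)%R) :
  (* upper bound: O(m log m) queries, success with high probability *)
  (exists (C : R) (M : nat) (eps : nat -> R),
     Un_cv eps 0 /\
     forall (n m : nat) (ends : 'I_m -> 'I_n * 'I_n),
       simple_graph ends -> (M <= m)%N ->
       exists A : alg m,
         (INR (queries A) <= C * INR m * ln (INR m))%R /\
         forall Real : {set 'I_m}, spanning_connected ends Real ->
           (1 - eps m <= success p ends Real A)%R)
  /\
  (* lower bound: Omega(m log m) queries for any constant failure prob. *)
  (forall delta : R, (0 < delta < 1/2)%R ->
   exists (c : R) (M : nat), (0 < c)%R /\
     forall m : nat, (M <= m)%N ->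
       exists (n : nat) (ends : 'I_m -> 'I_n * 'I_n),
         simple_graph ends /\
         (exists Real0 : {set 'I_m}, spanning_connected ends Real0) /\
         forall A : alg m,
           (INR (queries A) < c * INR m * ln (INR m))%R ->
           exists Real : {set 'I_m},
             spanning_connected ends Real /\
             (success p ends Real A < 1 - delta)%R).
Proof. by split; [exact: upper_bound | exact: lower_bound]. Qed.
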